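(* Let $\eta$ be an $\mathbb S$-invariant Borel probability measure on $I^{\mathbb Z}$, ergodic for $\mathbb S$, such that $(I^{\mathbb Z},\eta,\mathbb S)$ has a factor isomorphic to the odometer $(I^{\mathbb N},m,\mathbb O)$. Then for every $\alpha\in I^{\mathbb N}$ the measure $\nu^{(\alpha)}[\eta]$ defined below exists, belongs to $\mathbb M$, is ergodic with respect to $\mathbb S\times\mathbb O$, and satisfies $\theta_0[\nu^{(\alpha)}[\eta]]=\eta$. In particular there is an aperiodic ergodic $\nu\in\mathbb M$ with $\theta_0[\nu]=\eta$.
   Context: $I=\{0,1\}$. $\mathbb S$ is the left shift on $I^{\mathbb Z}$; $\mathbb S^j\eta$ denotes pushforward. $I^{\mathbb N}$ is the space of $0$–$1$ sequences $(\alpha_i)_{i\ge1}$ with uniform Bernoulli measure $m$; $\mathbb O$ is the odometer (if $\alpha_1=\dots=\alpha_{n-1}=1$, $\alpha_n=0$, then $\mathbb O[\alpha]_i=0$ for $i<n$, $\mathbb O[\alpha]_n=1$, $\mathbb O[\alpha]_i=\alpha_i$ for $i>n$). $\mathbb M$ is the set of Borel probability measures on $I^{\mathbb Z}\times I^{\mathbb N}$ invariant under $\mathbb S\times\mathbb O$. $A_{r,k}=\{\alpha:\sum_{i=1}^k\alpha_i2^{i-1}=r\}$; $\theta_k[\nu]$ is the normalized projection to $I^{\mathbb Z}$ of $\nu$ restricted to $I^{\mathbb Z}\times A_{0,k}$. A measure $\nu\in\mathbb M$ is of periodic type if $\nu=\sum_{i=0}^{2^k-1}\mathbb S^i\eta'\times(\chi_{A_{i,k}}m)$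 for some $k$ and some $\mathbb S^{2^k}$-invariant $\eta'$, and aperiodic otherwise. A sequence $(\theta_k)$ of probability measures with $\mathbb S^{2^k}\theta_k=\theta_k$ and $\theta_k=\frac12(\theta_{k+1}+\mathbb S^{2^k}\theta_{k+1})$ for all $k$ determines a unique $\nu\in\mathbb M$ with $\theta_k[\nu]=\theta_k$. Construction: let $\varrho_n=e^{2\pi i/2^n}$. Under the hypothesis, fix measurable $f_n$ ($n\ge0$) with $f_n\circ\mathbb S=\varrho_nf_n$ $\eta$-a.e., $f_0=1$, $f_n=f_{n+1}^2$ (such a family exists; then $f_n$ takes values in $\{\varrho_n^r:0\le r<2^n\}$ a.e.). Let $B(r,n)=\{w:f_n(w)=\varrho_n^r\}$, $r(n,\alpha)=\sum_{k=0}^{n-1}2^k\alpha_{k+1}$, $\theta_n^{(\alpha)}=2^n\,\eta|_{B(r(n,\alpha),n)}$. Then $\nu^{(\alpha)}[\eta]$ is the element of $\mathbb M$ with $\theta_n[\nu^{(\alpha)}[\eta]]=\theta_n^{(\alpha)}$ for all $n\ge0$. *)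

From HB Require Import structures.
From mathcomp Require Import all_boot all_order all_algebra.
From mathcomp Require Import all_classical all_reals all_analysis.
From mathcomp Require complex.
Import complex.ComplexField.

Set Implicit Arguments.
Unset Strict Implicit.
Unset Printing Implicit Defensive.

Import Order.TTheory GRing.Theory Num.Theory.
Local Open Scope classical_set_scope.
Local Open Scope ring_scope.

(* The spaces I^Z and I^N, I = {0,1} = bool, with the product (= Borel) *)
(* sigma-algebra, generated by the one-coordinate cylinders.           *)
(* Convention: alpha : nat -> bool, with alpha k standing for the      *)
(* paper's alpha_{k+1}.                                                *)

Definition cylZ : set (set (int -> bool)) :=
  [set A | exists (i : int) (b : bool), A = [set w | w i = b]].
Definition cylN : set (set (nat -> bool)) :=
  [set A | exists (i : nat) (b : bool), A = [set a | a i = b]].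

Definition IZ : measurableType _ := g_sigma_algebraType cylZ.
Definition IN : measurableType _ := g_sigma_algebraType cylN.

Definition XZN : measurableType _ := (IZ * IN)%type.

Definition shiftZ (w : IZ) : IZ := fun i : int => w (i + 1).

(* odometer O on I^N: bit i flips iff all lower bits are 1
   (the all-ones sequence, a null set, is sent to all zeros) *)
Definition odo (a : IN) : IN := fun i : nat => addb (a i) [forall j : 'I_i, a j].

Definition SO (x : XZN) : XZN := (shiftZ x.1, odo x.2).

Definition invariant_measure {d} {T : measurableType d} {R : realType}
  (mu : probability T R) (f : T -> T) : Prop :=
  forall A : set T, measurable A -> mu (f @^-1` A) = mu A.

Definition ergodic {d} {T : measurableType d} {R : realType}
  (mu : probability T R) (f : T -> T) : Prop :=
  forall A : set T, measurable A -> f @^-1` A = A ->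
    mu A = 0%E \/ mu A = 1%E.

Definition inM {R : realType} (nu : probability XZN R) : Prop :=
  invariant_measure nu SO.

Definition uniform_bernoulli {R : realType} (m : probability IN R) : Prop :=
  forall (k : nat) (s : nat -> bool),
    m [set a : IN | forall i : nat, (i < k)%N -> a i = s i] = ((2 : R) ^- k)%:E.

Definition has_odometer_factor {R : realType} (m : probability IN R)
  (eta : probability IZ R) : Prop :=
  exists pi : IZ -> IN,
    measurable_fun setT pi /\
    {ae eta, forall w, pi (shiftZ w) = odo (pi w)} /\
    (forall B : set IN, measurable B -> eta (pi @^-1` B) = m B).

Definition Ark (r k : nat) : set IN :=
  [set a : IN | (\sum_(i < k) (a i) * 2 ^ i)%N = r].

Definition theta {R : realType} (k : nat) (nu : probability XZN R) (B : set IZ) : R :=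
  fine (nu (B `*` Ark 0 k)) / fine (nu (setT `*` Ark 0 k)).

(* nu = sum_{i<2^k} S^i eta' x (chi_{A_{i,k}} m), stated on measurable *)
(* rectangles (which determine a finite measure on the product).       *)

Definition periodic_type {R : realType} (m : probability IN R)
  (nu : probability XZN R) : Prop :=
  exists (k : nat) (eta' : probability IZ R),
    invariant_measure eta' (iter (2 ^ k) shiftZ) /\
    forall (B : set IZ) (C : set IN), measurable B -> measurable C ->
      nu (B `*` C) =
      (\sum_(i < 2 ^ k) eta' (iter i shiftZ @^-1` B) * m (Ark i k `&` C))%E.

Definition rho {R : realType} (n : nat) : complex.complex R :=
  complex.Complex (cos (2 * pi / 2 ^+ n)) (sin (2 * pi / 2 ^+ n)).

(* measurability of a complex-valued function (Borel sigma-algebra of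
   C = R^2): real and imaginary parts measurable *)
Definition cmeasurable {R : realType} (g : IZ -> complex.complex R) : Prop :=
  measurable_fun setT (fun w => complex.Re (g w)) /\
  measurable_fun setT (fun w => complex.Im (g w)).

Definition admissible {R : realType} (eta : probability IZ R)
  (f : nat -> IZ -> complex.complex R) : Prop :=
  (forall n, cmeasurable (f n)) /\
  (forall n, {ae eta, forall w, f n (shiftZ w) = rho n * f n w}) /\
  (forall w, f 0%N w = 1) /\
  (forall n w, f n w = f n.+1 w ^+ 2).

Definition Bset {R : realType} (f : nat -> IZ -> complex.complex R)
  (r n : nat) : set IZ := [set w | f n w = rho n ^+ r].

Definition ralpha (n : nat) (alpha : IN) : nat :=
  (\sum_(k < n) 2 ^ k * alpha k)%N.

Definition theta_alpha {R : realType} (eta : probability IZ R)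
  (f : nat -> IZ -> complex.complex R) (alpha : IN) (n : nat)
  (B : set IZ) : \bar R :=
  ((2 ^+ n : R)%:E * eta (B `&` Bset f (ralpha n alpha) n))%E.

From HB Require Import structures.
From mathcomp Require Import all_boot all_order all_algebra.
From mathcomp Require Import all_classical all_reals all_analysis.
From mathcomp Require complex.
Import complex.ComplexField.
From mathcomp Require Import zify ring lra.

Set Implicit Arguments.
Unset Strict Implicit.
Unset Printing Implicit Defensive.

Import Order.TTheory GRing.Theory Num.Theory.
Local Open Scope classical_set_scope.
Local Open Scope ring_scope.

(* The odometer factor yields eigenfunctions [f n] of [shiftZ] with
   [f n (shiftZ w) = rho n * f n w] and [f n = (f n.+1)^2].  For fixed [w] the
   numbers [f n w / rho n ^ r(n, alpha)] form a chain of [2^n]-th roots of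
   unity, each the square of the next, i.e. a 2-adic integer; its binary
   digits give a point [code w] of [I^N] with [code (shiftZ w) = odo (code w)]
   almost everywhere.  The image [nu] of [eta] under [w |-> (w, code w)] is
   therefore [S x O]-invariant and isomorphic to [eta], hence ergodic, and its
   [theta_n] are the prescribed ones because [code w] lies in [A_{0,n}] exactly
   when [w] lies in [B(r(n, alpha), n)].  Conversely, an element of [M] with
   these [theta_n] gives no mass to [~ B(r(n, alpha), n) x A_{0,n}] nor to its
   images under powers of [S x O]; these sets cover everything off the graph of
   [code], so it equals [nu].  Finally [nu] distinguishes [A_{0,k+1}] from
   [A_{2^k,k+1}] above [B(r(k+1, alpha), k+1)], which no measure of periodic
   type [k] can do. *)

Section BinaryDigits.
Local Open Scope nat_scope.
Implicit Types a b : nat -> bool.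

Lemma ralpha0 a : ralpha 0 a = 0.
Proof. by rewrite /ralpha big_ord0. Qed.

Lemma ralphaS n a : ralpha n.+1 a = ralpha n a + 2 ^ n * a n.
Proof. by rewrite /ralpha big_ord_recr. Qed.

Lemma ralpha_lt n a : ralpha n a < 2 ^ n.
Proof.
elim: n => [|n IH]; first by rewrite ralpha0.
by rewrite ralphaS expnS; case: (a n) => /=; lia.
Qed.

Lemma ralpha_mod n a : ralpha n a = ralpha n.+1 a %% 2 ^ n.
Proof. by rewrite ralphaS addnC mulnC modnMDl modn_small ?ralpha_lt. Qed.

Lemma ralpha_eqP n a b : ralpha n a = ralpha n b <-> forall i, i < n -> a i = b i.
Proof.
elim: n => [|n IH]; first by rewrite !ralpha0.
have step : ralpha n.+1 a = ralpha n.+1 b <-> ralpha n a = ralpha n b /\ a n = b n.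
  rewrite !ralphaS; split=> [|[-> ->] //].
  have := ralpha_lt n a; have := ralpha_lt n b.
  by case: (a n); case: (b n) => /= ltb lta e; [split=> //; lia|exfalso; lia..|split=> //; lia].
rewrite step IH; split=> [[h e] i|h].
  by rewrite ltnS leq_eqVlt => /orP[/eqP->|/h].
by split=> [i lti|]; apply: h; [exact: ltnW|exact: ltnSn].
Qed.

Lemma ralpha_inj a b : (forall n, ralpha n a = ralpha n b) -> a = b.
Proof. by move=> h; apply/funext => n; apply: (ralpha_eqP n.+1 a b).1. Qed.

Lemma Ark_ralpha j n : Ark j n = [set a | ralpha n a = j].
Proof.
by apply/seteqP; split=> a; rewrite /Ark /ralpha /=; under eq_bigr do rewrite mulnC.
Qed.

Lemma Ark00 : Ark 0 0 = setT.
Proof. by rewrite Ark_ralpha; apply/seteqP; split=> a //= _; rewrite ralpha0. Qed.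

Lemma forall_ordS n a : [forall j : 'I_n.+1, a j] = [forall j : 'I_n, a j] && a n.
Proof.
apply/forallP/andP => [h|[/forallP h1 h2] j].
  by split; [apply/forallP => j; exact: (h (widen_ord (leqnSn n) j))|exact: (h ord_max)].
have [jn|] := ltnP j n; first exact: (h1 (Ordinal jn)).
by have := ltn_ord j; rewrite ltnS => jn nj; have -> : nat_of_ord j = n by lia.
Qed.

Lemma forall_ord_ralpha n a : [forall j : 'I_n, a j] = ((ralpha n a).+1 == 2 ^ n).
Proof.
elim: n => [|n IH]; first by rewrite ralpha0 expn0 eqxx; apply/forallP => -[].
rewrite forall_ordS IH ralphaS expnS.
by move: (ralpha_lt n a); case: (a n) => /= lt; rewrite ?andbT ?andbF; apply/idP/idP; lia.
Qed.

Lemma ralpha_odo n a : ralpha n (odo a) = (ralpha n a).+1 %% 2 ^ n.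
Proof.
elim: n => [|n IH]; first by rewrite !ralpha0 expn0 modn1.
rewrite !ralphaS IH /odo forall_ord_ralpha expnS.
have := ralpha_lt n a; set r := ralpha n a => lt.
have [e|ne] := eqVneq r.+1 (2 ^ n).
  rewrite e modnn /=; case: (a n) => /=; last by rewrite modn_small; lia.
  have -> : (r + 2 ^ n * 1).+1 = 2 * 2 ^ n by lia.
  by rewrite modnn muln0.
rewrite (modn_small (_ : r.+1 < 2 ^ n)); last by lia.
by rewrite addbF; case: (a n) => /=; rewrite modn_small; lia.
Qed.

Lemma ralpha_iter_odo n j a : ralpha n (iter j odo a) = (ralpha n a + j) %% 2 ^ n.
Proof.
elim: j => [|j IH] /=; first by rewrite addn0 modn_small // ralpha_lt.
by rewrite ralpha_odo IH addnS -addn1 modnDml addn1.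
Qed.

Definition bits_of (D : nat -> nat) : nat -> bool := fun k => 2 ^ k <= D k.+1.

Lemma ralpha_bits_of (D : nat -> nat) :
  (forall n, D n < 2 ^ n) -> (forall n, D n = D n.+1 %% 2 ^ n) ->
  forall n, ralpha n (bits_of D) = D n.
Proof.
move=> Dlt Dmod; elim=> [|n IH]; first by have := Dlt 0; rewrite ralpha0 expn0; lia.
rewrite ralphaS IH Dmod /bits_of.
have := Dlt n.+1; rewrite expnS; set x := D n.+1 => xlt.
have [le|lt] := leqP (2 ^ n) x; last by rewrite modn_small // muln0 addn0.
rewrite -{1}(subnK le) modnDr modn_small; lia.
Qed.

Lemma modn_addr_eq r j P : r < P -> j < P -> ((r + j) %% P == j) = (r == 0).
Proof.
move=> rP jP; have [lt|le] := ltnP (r + j) P.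
  by rewrite modn_small // -{2}(add0n j) eqn_add2r.
by rewrite -(subnK le) modnDr modn_small; lia.
Qed.

Lemma modn_addBn_eq0 t r P : t < P -> r < P -> ((t + (P - r)) %% P == 0) = (t == r).
Proof.
move=> tP rP; have [rt|tr] := leqP r t.
  have -> : t + (P - r) = (t - r) + P by lia.
  by rewrite modnDr modn_small; lia.
by rewrite modn_small; lia.
Qed.

End BinaryDigits.

(* Only this cast exposes the field (and eqType) structure of [complex.complex R]
   for an abstract [R : realType]. *)
Definition complexR (R : realType) : fieldType := complex.complex R.

Section RootsOfUnity.
Variable R : realType.
Local Notation C := (complexR R).

Lemma rho0 : rho 0 = 1 :> C.
Proof. by rewrite /rho expr0 divr1 mulr_natl cos2pi sin2pi. Qed.

Lemma rho1 : rho 1 = -1 :> C.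
Proof.
rewrite /rho (_ : 2 * pi / 2 ^+ 1 = pi :> R); last by rewrite expr1; field.
rewrite cospi sinpi (_ : -1 = complex.Complex (-1) (- 0) :> C) //.
by rewrite oppr0.
Qed.

Lemma rhoS_sqr n : rho n.+1 ^+ 2 = rho n :> C.
Proof.
rewrite /rho expr2 /=; set x := 2 * pi / 2 ^+ n.+1.
have -> : 2 * pi / 2 ^+ n = x + x by rewrite /x exprS; field; rewrite expf_neq0 // pnatr_eq0.
by rewrite cosD sinD (addrC (sin x * cos x)).
Qed.

Lemma rho_expn n : rho n ^+ (2 ^ n) = 1 :> C.
Proof.
elim: n => [|n IH]; first by rewrite rho0 expr1n.
by rewrite expnS exprM rhoS_sqr.
Qed.

Lemma rhoS_expn n : rho n.+1 ^+ (2 ^ n) = -1 :> C.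
Proof.
elim: n => [|n IH]; first by rewrite expn0 expr1 rho1.
by rewrite expnS exprM rhoS_sqr.
Qed.

Lemma rho_prim n : (2 ^ n).-primitive_root (rho n : C).
Proof.
have [m prim_m /(@dvdn_pfactor 2 _ _ isT)[k le_kn def_m]] :=
  prim_order_exists (expn_gt0 2 n) (rho_expn n).
rewrite def_m in prim_m; have [lt_kn|le_nk] := ltnP k n; last first.
  suff e : k = n by move: prim_m; rewrite e.
  by apply/eqP; rewrite eqn_leq le_kn le_nk.
case: n prim_m lt_kn {le_kn def_m} => // n prim_m le_kn.
have : rho n.+1 ^+ (2 ^ n) = 1 :> C.
  rewrite (_ : 2 ^ n = 2 ^ k * 2 ^ (n - k))%N ?exprM ?(prim_expr_order prim_m) ?expr1n //.
  by rewrite -expnD subnKC.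
by rewrite rhoS_expn => /(congr1 (@complex.Re R)) /=; lra.
Qed.

Lemma rho_neq0 n : rho n != 0 :> C.
Proof. by rewrite (prim_root_eq0 (rho_prim n)) expn_eq0. Qed.

Lemma rho_expr_eq n i j : (rho n ^+ i == rho n ^+ j :> C) = (i == j %[mod 2 ^ n]).
Proof. by rewrite (eq_prim_root_expr (rho_prim n)). Qed.

Lemma rho_expr_mod n i : rho n ^+ (i %% 2 ^ n) = rho n ^+ i :> C.
Proof. by rewrite (prim_expr_mod (rho_prim n)). Qed.

Definition rho_log n (z : C) : nat :=
  xget 0%N [set i | (i < 2 ^ n)%N /\ z = rho n ^+ i].

Lemma rho_logP n (z : C) : z ^+ (2 ^ n) = 1 ->
  (rho_log n z < 2 ^ n)%N /\ z = rho n ^+ rho_log n z.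
Proof.
move=> z1; have [i zi] := prim_rootP (rho_prim n) z1.
by have /(xgetPex 0%N) : exists i, (i < 2 ^ n)%N /\ z = rho n ^+ i by exists i.
Qed.

Lemma rho_log_eq n (z : C) j : z ^+ (2 ^ n) = 1 -> (j < 2 ^ n)%N ->
  rho_log n z = j <-> z = rho n ^+ j.
Proof.
move=> /rho_logP[lt ez] ltj; split=> [<- //|e].
by move: e; rewrite {1}ez => /eqP; rewrite rho_expr_eq !modn_small // => /eqP.
Qed.

Definition sqrt_chain (g : nat -> C) := g 0 = 1 /\ forall n, g n = g n.+1 ^+ 2.

Lemma sqrt_chain_unity g : sqrt_chain g -> forall n, g n ^+ (2 ^ n) = 1.
Proof.
move=> [g0 gS]; elim=> [|n IH]; first by rewrite expn0 expr1.
by rewrite expnS exprM -gS.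
Qed.

Lemma sqrt_chain_ralpha (a : nat -> bool) : sqrt_chain (fun n => rho n ^+ ralpha n a).
Proof.
split=> [|n]; first by rewrite ralpha0 expr0.
by rewrite -exprM mulnC exprM rhoS_sqr (ralpha_mod n a) rho_expr_mod.
Qed.

(* A square root chain is a 2-adic integer: the first [n] digits of
   [root_digits g] encode the exponent of [g n] as a power of [rho n]. *)
Definition root_digits (g : nat -> C) : nat -> bool :=
  bits_of (fun n => rho_log n (g n)).

Lemma root_digitsP g : sqrt_chain g ->
  forall n, g n = rho n ^+ ralpha n (root_digits g).
Proof.
move=> gc; have gu := sqrt_chain_unity gc.
have logP n := rho_logP (gu n).
have log_mod n : rho_log n (g n) = (rho_log n.+1 (g n.+1) %% 2 ^ n)%N.
  rewrite -(modn_small (logP n).1); apply/eqP; rewrite -rho_expr_eq -(logP n).2.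
  by rewrite gc.2 {1}(logP n.+1).2 -exprM mulnC exprM rhoS_sqr.
by move=> n; rewrite ralpha_bits_of //; [exact: (logP n).2|move=> k; exact: (logP k).1].
Qed.

Lemma root_digitsE (a : nat -> bool) : root_digits (fun n => rho n ^+ ralpha n a) = a.
Proof.
apply: ralpha_inj => n; apply/eqP.
move: (root_digitsP (sqrt_chain_ralpha a) n) => /eqP.
by rewrite eq_sym rho_expr_eq !modn_small ?ralpha_lt.
Qed.

End RootsOfUnity.

Section MeasurableHelpers.
Context d (T : measurableType d).

Lemma measurable_preimage d' (U : measurableType d') (h : T -> U) (A : set U) :
  measurable_fun setT h -> measurable A -> measurable (h @^-1` A).
Proof. by move=> mh mA; rewrite -[_ @^-1` _]setTI; exact: mh. Qed.

Lemma measurable_fun_of_nat d' (U : measurableType d') (g : nat -> U) :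
  measurable_fun setT g.
Proof. by []. Qed.

Lemma measurable_iter (h : T -> T) : measurable_fun setT h ->
  forall j, measurable_fun setT (iter j h).
Proof.
by move=> mh; elim=> [|j IH]; [exact: measurable_id|exact: measurableT_comp mh IH].
Qed.

Lemma measurable_cst_pred (P : Prop) : measurable [set _ : T | P].
Proof.
have [p|np] := pselect P.
  by rewrite (_ : [set _ | P] = setT) //; apply/seteqP; split.
by rewrite (_ : [set _ | P] = set0) //; apply/seteqP; split.
Qed.

Lemma measurable_fun_nat (u : T -> nat) :
  (forall j, measurable [set x | u x = j]) -> measurable_fun setT u.
Proof.
move=> mu _ Y _; rewrite setTI.
rewrite (_ : u @^-1` Y = \bigcup_(j in Y) [set x | u x = j]).
  by apply: bigcup_measurable => j _; exact: mu.
by apply/seteqP; split=> x /=; [exists (u x)|move=> [j Yj ->]].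
Qed.

Lemma measurable_fun_nat2 d' (U : measurableType d') (u v : T -> nat)
    (phi : nat -> nat -> U) :
  measurable_fun setT u -> measurable_fun setT v ->
  measurable_fun setT (fun x => phi (u x) (v x)).
Proof.
move=> mu mv _ Y _; rewrite setTI.
rewrite (_ : _ @^-1` Y = \bigcup_j \bigcup_k
    (u @^-1` [set j] `&` v @^-1` [set k] `&` [set _ | Y (phi j k)])).
  apply: bigcupT_measurable => j; apply: bigcupT_measurable => k.
  apply: measurableI; last exact: measurable_cst_pred.
  by apply: measurableI; exact: measurable_preimage.
apply/seteqP; split=> x /=; first by exists (u x) => //; exists (v x).
by move=> [j _ [k _ [[-> ->]]]].
Qed.

Lemma measure_eq_off_null (R : realType) (mu : {measure set T -> \bar R}) (N X Y : set T) :
  measurable N -> mu N = 0%E -> measurable X -> measurable Y ->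
  X `&` ~` N = Y `&` ~` N -> mu X = mu Y.
Proof.
move=> mN N0 mX mY XY.
have null Z : measurable Z -> mu (Z `&` N) = 0%E.
  move=> mZ; apply/eqP; rewrite -measure_le0 -N0 le_measure ?inE //.
  exact: measurableI.
rewrite (measureDI mu mX mN) (measureDI mu mY mN) !setDE XY.
by congr (_ + _)%E; exact: etrans (null _ mX) (esym (null _ mY)).
Qed.

Lemma pushforward_probability d' (U : measurableType d') (R : realType)
    (P : probability T R) (h : T -> U) :
  measurable_fun setT h -> exists nu : probability U R, forall A, nu A = P (h @^-1` A).
Proof.
move=> mh; have hP : h \in mfun by rewrite inE.
by exists (distribution P (mfun_Sub hP)) => A; rewrite /distribution /pushforward mfun_valP.
Qed.

Lemma invariant_iter (R : realType) (mu : probability T R) (h : T -> T) :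
  measurable_fun setT h -> invariant_measure mu h ->
  forall j A, measurable A -> mu (iter j h @^-1` A) = mu A.
Proof.
move=> mh hinv; elim=> [//|j IH] A mA.
have -> : iter j.+1 h @^-1` A = iter j h @^-1` (h @^-1` A) by [].
by rewrite IH ?hinv //; exact: measurable_preimage.
Qed.

End MeasurableHelpers.

Lemma measurable_cylZ (i : int) (b : bool) : measurable [set w : IZ | w i = b].
Proof. by apply: sub_sigma_algebra; exists i, b. Qed.

Lemma measurable_cylN (i : nat) (b : bool) : measurable [set a : IN | a i = b].
Proof. by apply: sub_sigma_algebra; exists i, b. Qed.

Lemma measurable_coordZ (i : int) : measurable_fun setT (fun w : IZ => w i).
Proof. by apply: (measurable_fun_bool true); rewrite setTI; exact: measurable_cylZ. Qed.

Lemma measurable_coordN (i : nat) : measurable_fun setT (fun a : IN => a i).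
Proof. by apply: (measurable_fun_bool true); rewrite setTI; exact: measurable_cylN. Qed.

Section MeasurableSequences.
Context d (T : measurableType d).

Lemma measurable_fun_IZ (h : T -> IZ) :
  (forall i, measurable_fun setT (fun x => h x i)) -> measurable_fun setT h.
Proof.
move=> mh; apply: (@measurability _ _ _ IZ setT h cylZ) => // _ [_ [i [b ->]] <-].
by rewrite setTI; exact: (measurable_preimage (mh i) (I : measurable [set b])).
Qed.

Lemma measurable_fun_IN (h : T -> IN) :
  (forall i, measurable_fun setT (fun x => h x i)) -> measurable_fun setT h.
Proof.
move=> mh; apply: (@measurability _ _ _ IN setT h cylN) => // _ [_ [i [b ->]] <-].
by rewrite setTI; exact: (measurable_preimage (mh i) (I : measurable [set b])).
Qed.

End MeasurableSequences.

Definition shiftk (k : int) (w : IZ) : IZ := fun i : int => w (i + k).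

Lemma shiftk0 w : shiftk 0 w = w.
Proof. by apply/funext => i; rewrite /shiftk addr0. Qed.

Lemma shiftkD a b w : shiftk a (shiftk b w) = shiftk (b + a) w.
Proof. by apply/funext => i; rewrite /shiftk (addrC b a) addrA. Qed.

Lemma shiftZE w : shiftZ w = shiftk 1 w.
Proof. by []. Qed.

Lemma iter_shiftZ n w : iter n shiftZ w = shiftk n w.
Proof.
elim: n => [|n IH]; first by rewrite shiftk0.
by rewrite iterS IH shiftZE shiftkD -addn1 PoszD.
Qed.

Lemma measurable_shiftk k : measurable_fun setT (shiftk k).
Proof. by apply: measurable_fun_IZ => i; exact: measurable_coordZ. Qed.

Lemma measurable_shiftZ : measurable_fun setT shiftZ.
Proof. exact: (measurable_shiftk 1). Qed.

Lemma measurable_bitN i : measurable_fun setT (fun a : IN => nat_of_bool (a i)).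
Proof. exact: (measurableT_comp (f := nat_of_bool)) (measurable_coordN i). Qed.

Lemma measurable_ralpha n : measurable_fun setT (ralpha n).
Proof.
elim: n => [|n IH].
  by apply: eq_measurable_fun (measurable_cst 0%N) => a _; rewrite ralpha0.
apply: eq_measurable_fun
  (measurable_fun_nat2 (fun j k => j + 2 ^ n * k)%N IH (measurable_bitN n)).
by move=> a _; rewrite ralphaS.
Qed.

Lemma measurable_odo : measurable_fun setT odo.
Proof.
apply: measurable_fun_IN => i; apply: eq_measurable_fun (measurable_fun_nat2
  (fun j k => addb (k == 1) (j.+1 == 2 ^ i))%N (measurable_ralpha i) (measurable_bitN i)).
by move=> a _; rewrite /odo forall_ord_ralpha; case: (a i).
Qed.

Lemma measurable_SO : measurable_fun setT SO.
Proof.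
apply: measurable_fun_pair.
  exact: measurableT_comp measurable_shiftZ measurable_fst.
exact: measurableT_comp measurable_odo measurable_snd.
Qed.

Lemma measurable_Ark j n : measurable (Ark j n).
Proof.
by rewrite Ark_ralpha; exact: measurable_preimage (measurable_ralpha n) (I : measurable [set j]).
Qed.

Lemma iter_SO j (x : XZN) : iter j SO x = (iter j shiftZ x.1, iter j odo x.2).
Proof. by elim: j => [|j IH] /=; [case: x|rewrite IH]. Qed.

Lemma invariant_shiftk (R : realType) (mu : probability IZ R) :
  invariant_measure mu shiftZ -> forall k A, measurable A -> mu (shiftk k @^-1` A) = mu A.
Proof.
move=> mu_inv k A mA; have mu_iter := invariant_iter measurable_shiftZ mu_inv.
case: k => n.
  rewrite -(mu_iter n A mA); congr (mu _).
  by apply/seteqP; split=> w /=; rewrite iter_shiftZ.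
have mB : measurable (shiftk (Negz n) @^-1` A) :=
  measurable_preimage (measurable_shiftk _) mA.
have e : n%:Z + (1 + Negz n) = 0 by rewrite NegzE; lia.
rewrite -(mu_iter n.+1 _ mB); congr (mu _).
by apply/seteqP; split=> w /=; rewrite iter_shiftZ shiftZE !shiftkD e shiftk0.
Qed.

Lemma preimage_iter_SO_Ark j n : (j < 2 ^ n)%N ->
  iter j SO @^-1` (setT `*` Ark j n) = setT `*` Ark 0 n.
Proof.
move=> ltj; apply/seteqP; split=> -[w a];
  rewrite /preimage /= iter_SO !Ark_ralpha /= ralpha_iter_odo.
  by move=> [_ /eqP]; rewrite modn_addr_eq ?ralpha_lt // => /eqP.
by move=> [_ ->]; rewrite add0n modn_small.
Qed.

Lemma Ark_setIS j c k :
  Ark j k `&` Ark c k.+1 = if j == (c %% 2 ^ k)%N then Ark c k.+1 else set0.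
Proof.
rewrite !Ark_ralpha; apply/seteqP; split=> a /=.
  by move=> [<- <-]; rewrite -ralpha_mod eqxx.
by case: eqP => [->|_] //= h; rewrite ralpha_mod h.
Qed.

Lemma inM_measure_Ark0 (R : realType) (nu : probability XZN R) : inM nu ->
  forall n, nu (setT `*` Ark 0 n) = ((2 ^+ n : R)^-1)%:E.
Proof.
move=> nu_inv n; set P := (2 ^ n)%N.
have mA j : measurable (@setT IZ `*` Ark j n : set XZN).
  exact: measurableX measurableT (measurable_Ark j n).
have eqA (j : 'I_P) : nu (setT `*` Ark j n) = nu (setT `*` Ark 0 n).
  by rewrite -(invariant_iter measurable_SO nu_inv j (mA j)) preimage_iter_SO_Ark.
have cover : setT = \big[setU/set0]_(j < P) (setT `*` Ark j n) :> set XZN.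
  rewrite -(bigcup_mkord _ (fun j => @setT IZ `*` Ark j n)).
  apply/seteqP; split=> // -[w a] _; exists (ralpha n a); first exact: ralpha_lt.
  by split=> //; rewrite Ark_ralpha.
have := probability_setT nu; rewrite cover measure_bigsetU_ord //; last first.
  move=> i j _ _ [[w a] [[_ ai] [_ aj]]]; apply: val_inj => /=.
  by move: ai aj; rewrite !Ark_ralpha /= => <- <-.
rewrite (eq_bigr (fun=> (fine (nu (setT `*` Ark 0 n)))%:E)); last first.
  by move=> i _; apply: etrans (eqA i) _; rewrite fineK // fin_num_measure.
rewrite sumEFin sumr_const card_ord => /eqP; rewrite eqe => /eqP h.
rewrite -(fineK (fin_num_measure _ _ (mA 0%N))); congr (_%:E).
have P0 : (P%:R : R) != 0 by rewrite pnatr_eq0 expn_eq0.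
have -> : 2 ^+ n = P%:R :> R by rewrite natrX.
by apply: (mulIf P0); rewrite mulVf // mulr_natr h.
Qed.

Lemma uniform_bernoulli_Ark (R : realType) (m : probability IN R) :
  uniform_bernoulli m ->
  forall k (s : nat -> bool), m (Ark (ralpha k s) k) = ((2 : R) ^- k)%:E.
Proof.
move=> hm k s; rewrite -(hm k s); congr (m _); rewrite Ark_ralpha.
by apply/seteqP; split=> a /=; move/ralpha_eqP.
Qed.

Section GraphMeasure.
Variables (R : realType) (eta : probability IZ R) (f : nat -> IZ -> complex.complex R).
Hypothesis f_adm : admissible eta f.
Variable alpha : IN.
Local Notation C := (complexR R).

Lemma sqrt_chain_eigen w : sqrt_chain (fun n => f n w : C).
Proof. by case: f_adm => _ [_ [f0 fS]]; split=> [|n]; [exact: f0|exact: fS]. Qed.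

Lemma measurable_f_eq n (c : C) : measurable [set w | f n w = c].
Proof.
case: f_adm => /(_ n) [mre mim] _.
rewrite (_ : [set w | f n w = c] = [set w | complex.Re (f n w) = complex.Re c] `&`
    [set w | complex.Im (f n w) = complex.Im c]).
  by apply: measurableI; exact: measurable_preimage (measurable_set1 _).
apply/seteqP; split=> w /=; first by move=> ->.
by case: (f n w) c => x y [x' y'] /= [-> ->].
Qed.

(* Normalized so that [code w] lies in [A_{0,n}] exactly when [w] lies in
   [B(r(n, alpha), n)] (see [code_Ark0]). *)
Definition phase (w : IZ) (n : nat) : C := f n w / rho n ^+ ralpha n alpha.

Lemma sqrt_chain_phase w : sqrt_chain (phase w).
Proof.
have [f0 fS] := sqrt_chain_eigen w.
have rS n : rho n ^+ ralpha n alpha = (rho n.+1 ^+ ralpha n.+1 alpha) ^+ 2 :> C.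
  exact: (sqrt_chain_ralpha R alpha).2 n.
split=> [|n]; first by rewrite /phase f0 ralpha0 expr0 divr1.
by rewrite /phase expr_div_n -fS -rS.
Qed.

Definition code (w : IZ) : IN := root_digits (phase w).
Definition graph (w : IZ) : XZN := (w, code w).

Lemma graph_preimageX B A : graph @^-1` (B `*` A) = B `&` code @^-1` A.
Proof. by []. Qed.

Lemma phase_code w n : phase w n = rho n ^+ ralpha n (code w).
Proof. exact: root_digitsP (sqrt_chain_phase w) n. Qed.

Lemma rho_ralpha_neq0 n : rho n ^+ ralpha n alpha != 0 :> C.
Proof. by rewrite expf_neq0 // rho_neq0. Qed.

Lemma code_Ark0 n : code @^-1` Ark 0 n = Bset f (ralpha n alpha) n.
Proof.
rewrite Ark_ralpha; apply/seteqP; split=> w; rewrite /preimage /Bset /=.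
  by move=> r0; apply: divr1_eq; rewrite -/(phase w n) phase_code r0 expr0.
move=> e; have := phase_code w n; rewrite /phase e divff ?rho_ralpha_neq0 // => /eqP.
by rewrite -(expr0 (rho n : C)) rho_expr_eq mod0n modn_small ?ralpha_lt // => /eqP.
Qed.

Lemma measurable_rho_log_phase n : measurable_fun setT (fun w => rho_log n (phase w n)).
Proof.
have unity w := sqrt_chain_unity (sqrt_chain_phase w) n.
apply: measurable_fun_nat => j; have [ltj|lej] := ltnP j (2 ^ n).
  rewrite (_ : [set w | _ = j] = [set w | f n w = rho n ^+ j * rho n ^+ ralpha n alpha]).
    exact: measurable_f_eq.
  apply/seteqP; split=> w /=.
    by move/(rho_log_eq (unity w) ltj); rewrite /phase => <-; rewrite divfK ?rho_ralpha_neq0.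
  by move=> e; apply/(rho_log_eq (unity w) ltj); rewrite /phase e mulfK ?rho_ralpha_neq0.
rewrite (_ : [set w | _ = j] = set0); first exact: measurable0.
apply/seteqP; split=> w //= e.
by have := (rho_logP (unity w)).1; rewrite e ltnNge lej.
Qed.

Lemma measurable_code : measurable_fun setT code.
Proof.
apply: measurable_fun_IN => k.
exact: measurableT_comp (measurable_fun_of_nat (fun j => 2 ^ k <= j)%N)
  (measurable_rho_log_phase k.+1).
Qed.

Lemma measurable_graph : measurable_fun setT graph.
Proof. by apply: measurable_fun_pair; [exact: measurable_id|exact: measurable_code]. Qed.

Lemma measurable_Bset n : measurable (Bset f (ralpha n alpha) n).
Proof.
by rewrite -code_Ark0; exact: measurable_preimage measurable_code (measurable_Ark 0 n).
Qed.

Definition equivariant_set := [set w | forall n, f n (shiftZ w) = rho n * f n w].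

Lemma code_shiftZ w : equivariant_set w -> code (shiftZ w) = odo (code w).
Proof.
move=> hw; rewrite -[odo _](root_digitsE R); congr root_digits; apply/funext => n.
by rewrite /phase hw -mulrA -/(phase w n) phase_code ralpha_odo rho_expr_mod exprS.
Qed.

Lemma measurable_equivariant_set : measurable equivariant_set.
Proof.
rewrite (_ : equivariant_set = \bigcap_n \bigcup_j
    ([set w | f n w = rho n ^+ j] `&` shiftZ @^-1` [set w | f n w = rho n ^+ j.+1])).
  apply: bigcapT_measurable => n; apply: bigcupT_measurable => j.
  apply: measurableI; first exact: measurable_f_eq.
  exact: measurable_preimage measurable_shiftZ (measurable_f_eq _ _).
apply/seteqP; split=> w /=.
  move=> hw n _; have [_ e] := rho_logP (sqrt_chain_unity (sqrt_chain_eigen w) n).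
  by exists (rho_log n (f n w)) => //; split=> //; rewrite /preimage /= hw exprS -e.
by move=> h n; have [j _ [-> ]] := h n I; rewrite /preimage /= => ->; rewrite exprS.
Qed.

Lemma equivariant_set_null : eta (~` equivariant_set) = 0%E.
Proof.
apply/negligibleP; first exact: measurableC measurable_equivariant_set.
case: f_adm => _ [f_ae _]; apply: negligibleS (negligible_bigcup f_ae).
by move=> w /= /existsNP[n hn]; exists n.
Qed.

(* Unlike [equivariant_set], this set is [shiftZ]-invariant. *)
Definition good_set := [set w | forall k : int, equivariant_set (shiftk k w)].

Lemma measurable_good_set : measurable good_set.
Proof.
rewrite (_ : good_set = \bigcap_n
    (shiftk (Posz n) @^-1` equivariant_set `&` shiftk (Negz n) @^-1` equivariant_set)).
  apply: bigcapT_measurable => n; apply: measurableI;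
  exact: measurable_preimage (measurable_shiftk _) measurable_equivariant_set.
apply/seteqP; split=> w /=; first by move=> h n _; split; exact: h.
by move=> h [] n; have [] := h n I.
Qed.

Lemma good_set_shiftZ w : good_set (shiftZ w) <-> good_set w.
Proof.
rewrite /good_set /=; split=> h k.
  by have := h (k - 1); rewrite shiftZE shiftkD addrC subrK.
by rewrite shiftZE shiftkD; exact: h.
Qed.

Lemma good_set_code w : good_set w -> code (shiftZ w) = odo (code w).
Proof. by move=> /(_ 0); rewrite shiftk0; exact: code_shiftZ. Qed.

Lemma good_set_iter j w : good_set w ->
  good_set (iter j shiftZ w) /\ code (iter j shiftZ w) = iter j odo (code w).
Proof.
move=> gw; elim: j => [//|j [gj ej]] /=.
by split; [exact/good_set_shiftZ|rewrite good_set_code // ej].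
Qed.

Hypothesis eta_inv : invariant_measure eta shiftZ.

Lemma good_set_null : eta (~` good_set) = 0%E.
Proof.
apply/negligibleP; first exact: measurableC measurable_good_set.
have null k : eta.-negligible (~` (shiftk k @^-1` equivariant_set)).
  have mE := measurableC measurable_equivariant_set.
  apply/negligibleP.
    exact: measurableC (measurable_preimage (measurable_shiftk k) measurable_equivariant_set).
  by rewrite preimage_setC; exact: etrans (invariant_shiftk eta_inv k mE) equivariant_set_null.
apply: negligibleS (negligible_bigcup (fun n => negligibleU (null n) (null (Negz n)))).
by move=> w /= /existsNP[[] n hn]; exists n => //; [left|right].
Qed.

Lemma theta_alpha0 B : theta_alpha eta f alpha 0 B = eta B.
Proof.
rewrite /theta_alpha expr0 mul1e (_ : Bset f _ 0 = setT) ?setIT //.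
apply/seteqP; split=> w // _; rewrite /Bset /= ralpha0 expr0.
exact: (sqrt_chain_eigen w).1.
Qed.

Variable nu : probability XZN R.
Hypothesis nuE : forall A, nu A = eta (graph @^-1` A).

Lemma graph_inM : inM nu.
Proof.
move=> A mA; rewrite !nuE -(eta_inv (measurable_preimage measurable_graph mA)).
apply: (measure_eq_off_null (N := ~` good_set)).
- exact: measurableC measurable_good_set.
- exact: good_set_null.
- exact: measurable_preimage measurable_graph (measurable_preimage measurable_SO mA).
- exact: measurable_preimage measurable_shiftZ (measurable_preimage measurable_graph mA).
apply/seteqP; split=> w /= [h ngw]; split=> //; have gw := contrapT ngw;
  by move: h; rewrite /graph /SO /= good_set_code.
Qed.

Lemma graph_theta n B : measurable B ->
  (theta n nu B)%:E = theta_alpha eta f alpha n B.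
Proof.
move=> mB; rewrite /theta /theta_alpha (inM_measure_Ark0 graph_inM) /= invrK nuE.
rewrite graph_preimageX code_Ark0 EFinM fineK; first by rewrite muleC.
exact: fin_num_measure (measurableI _ _ mB (measurable_Bset n)).
Qed.

Hypothesis eta_erg : ergodic eta shiftZ.

(* Off the null set [~` good_set], [graph] conjugates [shiftZ] to [SO], so
   invariant sets of [nu] pull back to invariant sets of [eta]. *)
Lemma graph_ergodic : ergodic nu SO.
Proof.
move=> A mA SA; set A' := graph @^-1` A.
have SA' w a : A (shiftZ w, odo a) = A (w, a) := congr1 (fun S : set XZN => S (w, a)) SA.
have mA' : measurable A' := measurable_preimage measurable_graph mA.
have A'S w : good_set w -> A' (shiftZ w) = A' w.
  by move=> gw; rewrite /A' /preimage /graph /= good_set_code // SA'.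
have inv : shiftZ @^-1` (A' `&` good_set) = A' `&` good_set.
  apply/seteqP; split=> w /= [h1 h2].
    have gw : good_set w by apply/good_set_shiftZ.
    by split=> //; rewrite -A'S.
  by split; [rewrite A'S|apply/good_set_shiftZ].
have -> : nu A = eta (A' `&` good_set).
  rewrite nuE; apply: (measure_eq_off_null (N := ~` good_set)) => //.
  - exact: measurableC measurable_good_set.
  - exact: good_set_null.
  - exact: measurableI mA' measurable_good_set.
  - by rewrite setCK -setIA setIid.
exact: eta_erg (measurableI _ _ mA' measurable_good_set) inv.
Qed.

Definition off_graph : set XZN := (~` good_set `*` setT) `|`
  \bigcup_n \bigcup_j (iter j SO @^-1` (~` Bset f (ralpha n alpha) n `*` Ark 0 n)).

Lemma measurable_off_Bset n : measurable (~` Bset f (ralpha n alpha) n `*` Ark 0 n : set XZN).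
Proof. exact: measurableX (measurableC (measurable_Bset n)) (measurable_Ark 0 n). Qed.

Lemma measurable_off_graph : measurable off_graph.
Proof.
apply: measurableU; first exact: measurableX (measurableC measurable_good_set) measurableT.
apply: bigcupT_measurable => n; apply: bigcupT_measurable => j.
exact: measurable_preimage (measurable_iter measurable_SO j) (measurable_off_Bset n).
Qed.

(* If [a <> code w], some prefix [r(n, a)] differs from [r(n, code w)], and
   [2^n - r(n, a)] odometer steps move [(w, a)] into [~` B(r(n, alpha), n) `*` A_{0,n}]. *)
Lemma off_graph_code w a : ~ off_graph (w, a) -> a = code w.
Proof.
move=> noff; apply: contrapT => ne; apply: noff.
have [gw|] := pselect (good_set w); last by left.
right; have [n hn] : exists n, ralpha n a <> ralpha n (code w).
  by apply/existsNP => h; apply/ne/ralpha_inj.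
have la := ralpha_lt n a; have lg := ralpha_lt n (code w).
exists n => //; exists (2 ^ n - ralpha n a)%N => //; rewrite /preimage /= iter_SO /=; split.
  rewrite -code_Ark0 /preimage /= (good_set_iter _ gw).2 Ark_ralpha /= ralpha_iter_odo.
  by move=> /eqP; rewrite modn_addBn_eq0 // => /eqP /esym.
by rewrite Ark_ralpha /= ralpha_iter_odo subnKC ?modnn // ltnW.
Qed.

Section Uniqueness.
Variable nu' : probability XZN R.
Hypothesis nu'_inM : inM nu'.
Hypothesis nu'_theta : forall n B, measurable B ->
  (theta n nu' B)%:E = theta_alpha eta f alpha n B.

Lemma marginal_theta0 X : measurable X -> nu' (X `*` setT) = eta X.
Proof.
move=> mX; have := nu'_theta 0 mX.
rewrite /theta theta_alpha0 Ark00 setXTT probability_setT /= divr1 fineK //.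
exact: fin_num_measure (measurableX mX measurableT).
Qed.

Lemma off_Bset_null n : nu' (~` Bset f (ralpha n alpha) n `*` Ark 0 n) = 0%E.
Proof.
have := nu'_theta n (measurableC (measurable_Bset n)).
rewrite /theta /theta_alpha setICl measure0 mule0 (inM_measure_Ark0 nu'_inM) /= invrK.
move=> /(congr1 fine) /= /eqP; rewrite mulf_eq0 expf_eq0 pnatr_eq0 andbF orbF => /eqP h0.
by rewrite -(fineK (fin_num_measure _ _ (measurable_off_Bset n))) h0.
Qed.

Lemma off_graph_null : nu' off_graph = 0%E.
Proof.
apply/negligibleP; first exact: measurable_off_graph.
apply: negligibleU.
  apply/negligibleP; first exact: measurableX (measurableC measurable_good_set) measurableT.
  exact: etrans (marginal_theta0 (measurableC measurable_good_set)) good_set_null.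
apply: negligible_bigcup => n; apply: negligible_bigcup => j.
apply/negligibleP.
  exact: measurable_preimage (measurable_iter measurable_SO j) (measurable_off_Bset n).
exact: etrans (invariant_iter measurable_SO nu'_inM j (measurable_off_Bset n))
  (off_Bset_null n).
Qed.

Lemma concentration A : measurable A -> nu' A = eta (graph @^-1` A).
Proof.
move=> mA; have mgA := measurable_preimage measurable_graph mA.
rewrite -marginal_theta0 //; apply: (measure_eq_off_null (N := off_graph)) => //.
- exact: measurable_off_graph.
- exact: off_graph_null.
- exact: measurableX mgA measurableT.
apply/seteqP; split=> -[w a] /= [h noff]; split=> //; have e := off_graph_code noff.
  by split=> //; rewrite /preimage /graph /= -e.
by move: h => [+ _]; rewrite /preimage /graph /= -e.
Qed.

End Uniqueness.

Lemma graph_not_periodic (m : probability IN R) :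
  uniform_bernoulli m -> ~ periodic_type m nu.
Proof.
move=> hm [k [eta' [_ nu_per]]]; set B := Bset f (ralpha k.+1 alpha) k.+1.
have mB : measurable B := measurable_Bset k.+1.
have s0 : ralpha k.+1 (fun=> false) = 0%N by rewrite /ralpha big1 // => i _; rewrite muln0.
have s1 : ralpha k.+1 (fun i => i == k) = (2 ^ k)%N.
  rewrite ralphaS eqxx muln1 [ralpha k _](_ : _ = 0%N) //.
  by rewrite /ralpha big1 // => i _; rewrite ltn_eqF ?muln0.
have mK0 := uniform_bernoulli_Ark hm k.+1 (fun=> false); rewrite s0 in mK0.
have mK1 := uniform_bernoulli_Ark hm k.+1 (fun i => i == k); rewrite s1 in mK1.
have nuBE c : (c %% 2 ^ k = 0)%N -> nu (B `*` Ark c k.+1) = (eta' B * m (Ark c k.+1))%E.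
  move=> c0; rewrite nu_per //; last exact: measurable_Ark.
  rewrite (bigD1 (Ordinal (expn_gt0 2 k))) //= big1 ?adde0.
    by rewrite Ark_setIS c0 eqxx.
  by move=> i ni0; rewrite Ark_setIS c0 ifN ?measure0 ?mule0.
have : nu (B `*` Ark 0 k.+1) = nu (B `*` Ark (2 ^ k) k.+1).
  by rewrite !nuBE ?mod0n ?modnn // mK0 mK1.
rewrite !nuE !graph_preimageX code_Ark0 -/B setIid.
have -> : B `&` code @^-1` Ark (2 ^ k) k.+1 = set0.
  apply/seteqP; split=> // w []; rewrite /B -code_Ark0 /preimage !Ark_ralpha /= => ->.
  by move=> /esym /eqP; rewrite expn_eq0.
have : eta B = nu (setT `*` Ark 0 k.+1) by rewrite nuE graph_preimageX code_Ark0 setTI.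
rewrite measure0 (inM_measure_Ark0 graph_inM) => -> /eqP.
by rewrite eqe invr_eq0 expf_eq0 pnatr_eq0 andbF.
Qed.

End GraphMeasure.

Lemma graph_measure_spec (R : realType) (eta : probability IZ R)
    (f : nat -> IZ -> complex.complex R) (alpha : IN) :
  invariant_measure eta shiftZ -> ergodic eta shiftZ -> admissible eta f ->
  (exists nu : probability XZN R, inM nu /\
     forall n (B : set IZ), measurable B ->
       (theta n nu B)%:E = theta_alpha eta f alpha n B) /\
  (forall nu : probability XZN R, inM nu ->
     (forall n (B : set IZ), measurable B ->
       (theta n nu B)%:E = theta_alpha eta f alpha n B) ->
     ergodic nu SO /\ (forall B : set IZ, measurable B -> (theta 0 nu B)%:E = eta B)).
Proof.
move=> eta_inv eta_erg f_adm.
have [nu nuE] := pushforward_probability eta (measurable_graph f_adm alpha).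
split; first by exists nu; split; [exact: graph_inM nuE|exact: graph_theta _ _ nuE].
move=> nu' nu'_inM nu'_theta; split=> [A mA SA|B mB]; last first.
  by rewrite nu'_theta // theta_alpha0.
rewrite (concentration f_adm eta_inv nu'_inM nu'_theta mA) -nuE.
exact: graph_ergodic nuE eta_erg A mA SA.
Qed.

Section FactorChain.
Variables (R : realType) (eta : probability IZ R) (pi : IZ -> IN).
Hypothesis pi_meas : measurable_fun setT pi.
Hypothesis pi_odo : {ae eta, forall w, pi (shiftZ w) = odo (pi w)}.

Definition factor_chain (n : nat) (w : IZ) : complex.complex R :=
  rho n ^+ ralpha n (pi w).

Lemma admissible_factor_chain : admissible eta factor_chain.
Proof.
split; [|split; [|split]].
- move=> n; have mr := measurableT_comp (measurable_ralpha n) pi_meas.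
  split; first exact: measurableT_comp
    (measurable_fun_of_nat (fun j => complex.Re (rho n ^+ j : complexR R))) mr.
  exact: measurableT_comp
    (measurable_fun_of_nat (fun j => complex.Im (rho n ^+ j : complexR R))) mr.
- move=> n; apply: negligibleS pi_odo => w /= neq eq; apply: neq.
  by rewrite /factor_chain eq ralpha_odo rho_expr_mod exprS.
- by move=> w; rewrite /factor_chain ralpha0 expr0.
- by move=> n w; exact: (sqrt_chain_ralpha R (pi w)).2.
Qed.

End FactorChain.

Theorem lemma6 (R : realType) (m : probability IN R)
  (hm : uniform_bernoulli m)
  (eta : probability IZ R)
  (eta_inv : invariant_measure eta shiftZ)
  (eta_erg : ergodic eta shiftZ)
  (eta_fac : has_odometer_factor m eta) :
  (exists f : nat -> IZ -> complex.complex R, admissible eta f) /\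
  (forall (f : nat -> IZ -> complex.complex R), admissible eta f ->
   forall alpha : IN,
     (exists nu : probability XZN R, inM nu /\
        forall n (B : set IZ), measurable B ->
          (theta n nu B)%:E = theta_alpha eta f alpha n B) /\
     (forall nu : probability XZN R, inM nu ->
        (forall n (B : set IZ), measurable B ->
          (theta n nu B)%:E = theta_alpha eta f alpha n B) ->
        ergodic nu SO /\
        (forall B : set IZ, measurable B -> (theta 0 nu B)%:E = eta B))) /\
  (exists nu : probability XZN R,
     inM nu /\ ergodic nu SO /\ ~ periodic_type m nu /\
     (forall B : set IZ, measurable B -> (theta 0 nu B)%:E = eta B)).
Proof.
have [pi [pi_meas [pi_odo _]]] := eta_fac.
have chain_adm := admissible_factor_chain pi_meas pi_odo.
split; first by exists (factor_chain R pi).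
split=> [f f_adm alpha|]; first exact: graph_measure_spec.
have [nu nuE] := pushforward_probability eta (measurable_graph chain_adm (fun=> false)).
exists nu; split; first exact: graph_inM nuE.
split; first exact: graph_ergodic nuE eta_erg.
split; first exact: (graph_not_periodic chain_adm eta_inv (alpha := fun=> false) nuE hm).
by move=> B mB; rewrite (graph_theta _ _ nuE) // theta_alpha0.
Qed.
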